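(* There exists a countable metrizable precompact abelian topological group which is not $g$-reversible.
   Context: All topological groups are assumed Hausdorff. A topological group $G$ is called $g$-reversible if every continuous automorphism of $G$ (i.e. every continuous group isomorphism of $G$ onto itself) is an open map. A Hausdorff abelian group is precompact if it is a subgroup of a compact Hausdorff group, equivalently for each neighbourhood $U$ of $0$ there is a finite $F$ with $U+F=G$. *)

From HB Require Import structures.
From mathcomp Require Import all_boot all_order all_algebra.
From Stdlib Require Import Reals.

Set Implicit Arguments.
Unset Strict Implicit.
Unset Printing Implicit Defensive.

Import GRing.Theory.
Local Open Scope ring_scope.

Definition is_topology (T : Type) (op : (T -> Prop) -> Prop) : Prop :=
  op (fun _ => True) /\
  (forall U V, op U -> op V -> op (fun x => U x /\ V x)) /\
  (forall F : (T -> Prop) -> Prop, (forall U, F U -> op U) ->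
     op (fun x => exists U, F U /\ U x)).

Definition hausdorff (T : Type) (op : (T -> Prop) -> Prop) : Prop :=
  forall x y : T, x <> y -> exists U V, op U /\ op V /\ U x /\ V y /\
     (forall z, U z -> V z -> False).

Definition is_top_group (G : zmodType) (op : (G -> Prop) -> Prop) : Prop :=
  is_topology op /\ hausdorff op /\
  (* addition G x G -> G is continuous (product topology) *)
  (forall (x y : G) W, op W -> W (x + y) ->
     exists U V, op U /\ op V /\ U x /\ V y /\
       (forall a b, U a -> V b -> W (a + b))) /\
  (forall W, op W -> op (fun x : G => W (- x))).

Definition countable_type (T : Type) : Prop :=
  exists f : T -> nat, forall x y, f x = f y -> x = y.

Definition is_metric (T : Type) (d : T -> T -> R) : Prop :=
  (forall x y, Rle 0 (d x y)) /\
  (forall x y, d x y = 0%R <-> x = y) /\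
  (forall x y, d x y = d y x) /\
  (forall x y z, Rle (d x z) (Rplus (d x y) (d y z))).

Definition metrizable (T : Type) (op : (T -> Prop) -> Prop) : Prop :=
  exists d : T -> T -> R, is_metric d /\
    forall U, op U <-> (forall x, U x -> exists eps, Rlt 0 eps /\
                          forall y, Rlt (d x y) eps -> U y).

Definition nbhd0 (G : zmodType) (op : (G -> Prop) -> Prop) (U : G -> Prop) :=
  exists V, op V /\ V 0 /\ (forall x, V x -> U x).

Definition precompact (G : zmodType) (op : (G -> Prop) -> Prop) : Prop :=
  forall U, nbhd0 op U ->
    exists F : seq G, forall g : G, exists u f, U u /\ List.In f F /\ g = u + f.

Definition continuous_map (T S : Type) (opT : (T -> Prop) -> Prop)
  (opS : (S -> Prop) -> Prop) (f : T -> S) : Prop :=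
  forall W, opS W -> opT (fun x => W (f x)).

Definition open_map (T S : Type) (opT : (T -> Prop) -> Prop)
  (opS : (S -> Prop) -> Prop) (f : T -> S) : Prop :=
  forall U, opT U -> opS (fun y => exists x, U x /\ f x = y).

Definition cont_automorphism (G : zmodType) (op : (G -> Prop) -> Prop)
  (f : G -> G) : Prop :=
  (forall x y, f (x + y) = f x + f y) /\
  (forall x y, f x = f y -> x = y) /\
  (forall y, exists x, f x = y) /\
  continuous_map op op f.

Definition g_reversible (G : zmodType) (op : (G -> Prop) -> Prop) : Prop :=
  forall f : G -> G, cont_automorphism op f -> open_map op op f.

From HB Require Import structures.
From mathcomp Require Import all_boot all_order all_algebra.
From Stdlib Require Import Reals Lia Lra.

(* The group is the countable Boolean group of finite subsets of N under
   symmetric difference, coded by natural numbers under [Nat.lxor]; it carries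
   the topology of pointwise convergence inherited from the compact group
   (Z/2)^N, metrized by d(x, y) = 2^-(least bit where x and y differ).
   The map f x = x + (x shifted down by one), i.e. (f x)_i = x_i + x_(i+1),
   is a continuous automorphism: it is injective because f x = 0 forces x to
   be shift-invariant, and x_i = sum_(j >= i) (f x)_j inverts it on finitely
   supported sequences.  It is not open: f (e_0 + ... + e_k) = e_k, so the
   image of the open subgroup {x | x_0 = 0} misses every e_k, while e_k -> 0. *)

Set Implicit Arguments.
Unset Strict Implicit.

Local Open Scope coq_nat_scope.

Definition vanishes_below (k u : nat) : Prop :=
  forall i, i < k -> Nat.testbit u i = false.

Lemma vanishes_below0 k : vanishes_below k 0.
Proof. by move=> i _; apply: Nat.bits_0. Qed.

Lemma vanishes_below_lxor k u v :
  vanishes_below k u -> vanishes_below k v -> vanishes_below k (Nat.lxor u v).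
Proof. by move=> Hu Hv i Hi; rewrite Nat.lxor_spec Hu ?Hv. Qed.

Lemma vanishes_below_le j k u : j <= k -> vanishes_below k u -> vanishes_below j u.
Proof. by move=> Hjk Hu i Hi; apply: Hu; lia. Qed.

Lemma lxor_cancel_l x y z : Nat.lxor (Nat.lxor x y) (Nat.lxor y z) = Nat.lxor x z.
Proof. by rewrite Nat.lxor_assoc -(Nat.lxor_assoc y) Nat.lxor_nilpotent Nat.lxor_0_l. Qed.

Lemma lxor_swap a b c d :
  Nat.lxor (Nat.lxor a b) (Nat.lxor c d) = Nat.lxor (Nat.lxor a c) (Nat.lxor b d).
Proof.
apply: Nat.bits_inj => n; rewrite !Nat.lxor_spec.
by do 4 case: (Nat.testbit _ n).
Qed.

Lemma div2_lxor a b : Nat.div2 (Nat.lxor a b) = Nat.lxor (Nat.div2 a) (Nat.div2 b).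
Proof.
by apply: Nat.bits_inj => n; rewrite Nat.testbit_div2 !Nat.lxor_spec !Nat.testbit_div2.
Qed.

(* Index of the lowest set bit; [fuel] only has to exceed that index. *)
Fixpoint lsb_rec (fuel u : nat) : nat :=
  match fuel with
  | 0 => 0
  | S f => if Nat.odd u then 0 else S (lsb_rec f (Nat.div2 u))
  end.

Definition lsb (u : nat) : nat := lsb_rec u u.

Lemma lsb_rec_spec fuel u : u <> 0 -> u <= fuel ->
  Nat.testbit u (lsb_rec fuel u) = true /\ vanishes_below (lsb_rec fuel u) u.
Proof.
elim: fuel u => [|f IH] u u_neq0 u_le; first lia.
rewrite /=; case odd_u: (Nat.odd u).
  by split=> [|i Hi]; [rewrite Nat.bit0_odd | lia].
have := Nat.div2_odd u; rewrite odd_u /= => u_eq.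
have [IH1 IH2] := IH (Nat.div2 u) ltac:(lia) ltac:(lia).
split=> [//|[|i] Hi]; first by rewrite Nat.bit0_odd.
by apply: IH2; lia.
Qed.

Lemma vanishes_below_lsb k u : u <> 0 -> vanishes_below k u <-> k <= lsb u.
Proof.
move=> u_neq0; have [lsb_set lsb_low] := lsb_rec_spec u_neq0 (le_n u).
split=> [Hu | Hk i Hi]; last by apply: lsb_low; rewrite /lsb in Hk; lia.
case: (Nat.le_gt_cases k (lsb u)) => // Hk.
by rewrite Hu in lsb_set.
Qed.

Definition half_pow (n : nat) : R := Rinv (2 ^ n).

Lemma half_pow_gt0 n : Rlt 0 (half_pow n).
Proof. by apply: Rinv_0_lt_compat; apply: pow_lt; lra. Qed.

Lemma half_pow_lt m n : m < n -> Rlt (half_pow n) (half_pow m).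
Proof.
move=> lt_mn; apply: Rinv_lt_contravar; last by apply: Rlt_pow => //; lra.
by apply: Rmult_lt_0_compat; apply: pow_lt; lra.
Qed.

Lemma half_pow_le m n : m <= n -> Rle (half_pow n) (half_pow m).
Proof.
by case/Nat.lt_eq_cases => [/half_pow_lt | ->]; [left | right].
Qed.

Lemma half_pow_small eps : Rlt 0 eps -> exists k, Rlt (half_pow k) eps.
Proof.
move=> eps_gt0; have [|k Hk] := pow_lt_1_zero (Rinv 2) _ eps eps_gt0.
  by rewrite Rabs_pos_eq; lra.
exists k; move: (Hk k (le_n k)); rewrite /half_pow -pow_inv Rabs_pos_eq //.
by left; rewrite pow_inv; apply: half_pow_gt0.
Qed.

Definition bnorm (z : nat) : R := if Nat.eq_dec z 0 then 0%R else half_pow (lsb z).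

Lemma bnorm_ge0 z : Rle 0 (bnorm z).
Proof. by rewrite /bnorm; case: Nat.eq_dec => ?; [right | left; apply: half_pow_gt0]. Qed.

Lemma bnorm_eq0 z : bnorm z = 0%R <-> z = 0.
Proof.
rewrite /bnorm; case: Nat.eq_dec => //= z_neq0.
by split=> [|/z_neq0 //]; have := half_pow_gt0 (lsb z); lra.
Qed.

Lemma bnorm_le k z : vanishes_below k z -> Rle (bnorm z) (half_pow k).
Proof.
rewrite /bnorm; case: Nat.eq_dec => /= [_ _ | z_neq0 /(vanishes_below_lsb _ z_neq0)].
  by left; apply: half_pow_gt0.
exact: half_pow_le.
Qed.

Lemma bnorm_lt k z : Rlt (bnorm z) (half_pow k) -> vanishes_below k z.
Proof.
rewrite /bnorm; case: Nat.eq_dec => /= [-> _ | z_neq0 lt_norm]; first exact: vanishes_below0.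
apply/vanishes_below_lsb => //; case: (Nat.le_gt_cases k (lsb z)) => // /half_pow_lt.
lra.
Qed.

Lemma bnorm_lxor a b : Rle (bnorm (Nat.lxor a b)) (Rplus (bnorm a) (bnorm b)).
Proof.
have [->|a_neq0] := Nat.eq_dec a 0; first by rewrite Nat.lxor_0_l; have := bnorm_ge0 0; lra.
have [->|b_neq0] := Nat.eq_dec b 0; first by rewrite Nat.lxor_0_r; have := bnorm_ge0 0; lra.
have low_a := proj2 (vanishes_below_lsb _ a_neq0) (le_n _).
have low_b := proj2 (vanishes_below_lsb _ b_neq0) (le_n _).
have bnorm_a : bnorm a = half_pow (lsb a) by rewrite /bnorm; case: Nat.eq_dec.
have bnorm_b : bnorm b = half_pow (lsb b) by rewrite /bnorm; case: Nat.eq_dec.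
case: (Nat.le_ge_cases (lsb a) (lsb b)) => [le_ab | le_ba].
- have := bnorm_le (vanishes_below_lxor low_a (vanishes_below_le le_ab low_b)).
  have := half_pow_gt0 (lsb b); lra.
- have := bnorm_le (vanishes_below_lxor (vanishes_below_le le_ba low_a) low_b).
  have := half_pow_gt0 (lsb a); lra.
Qed.

Record bitset := Bitset { bits : nat }.

HB.instance Definition _ := [isNew for bits].
HB.instance Definition _ := [Choice of bitset by <:].

Lemma bits_inj : injective bits.
Proof. by case=> a [b] /= ->. Qed.

Definition bitset_add (a b : bitset) := Bitset (Nat.lxor (bits a) (bits b)).

Lemma bitset_addA : associative bitset_add.
Proof. by move=> a b c; apply: bits_inj; rewrite /= Nat.lxor_assoc. Qed.

Lemma bitset_addC : commutative bitset_add.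
Proof. by move=> a b; apply: bits_inj; rewrite /= Nat.lxor_comm. Qed.

Lemma bitset_add0r : left_id (Bitset 0) bitset_add.
Proof. by move=> a; apply: bits_inj; rewrite /= Nat.lxor_0_l. Qed.

Lemma bitset_addNr : left_inverse (Bitset 0) (@id bitset) bitset_add.
Proof. by move=> a; apply: bits_inj; rewrite /= Nat.lxor_nilpotent. Qed.

HB.instance Definition _ :=
  GRing.isZmodule.Build bitset bitset_addA bitset_addC bitset_add0r bitset_addNr.

Definition bdist (x y : bitset) : R := bnorm (Nat.lxor (bits x) (bits y)).

Lemma bdist_metric : is_metric bdist.
Proof.
split; [|split; [|split]] => [x y | x y | x y | x y z]; rewrite /bdist.
- exact: bnorm_ge0.
- by rewrite bnorm_eq0 Nat.lxor_eq_0_iff; split=> [/bits_inj | ->].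
- by rewrite Nat.lxor_comm.
- by rewrite -(lxor_cancel_l _ (bits y)); apply: bnorm_lxor.
Qed.

Lemma bitsD (x y : bitset) : bits (GRing.add x y) = Nat.lxor (bits x) (bits y).
Proof. by []. Qed.

Definition ball (k : nat) (x y : bitset) : Prop :=
  vanishes_below k (Nat.lxor (bits x) (bits y)).

Definition bopen (U : bitset -> Prop) : Prop :=
  forall x, U x -> exists k, forall y, ball k x y -> U y.

Lemma ball_refl k x : ball k x x.
Proof. by rewrite /ball Nat.lxor_nilpotent; apply: vanishes_below0. Qed.

Lemma ball_sym k x y : ball k x y -> ball k y x.
Proof. by rewrite /ball Nat.lxor_comm. Qed.

Lemma ball_trans k x y z : ball k x y -> ball k y z -> ball k x z.
Proof.
by move=> Bxy Byz; rewrite /ball -(lxor_cancel_l _ (bits y)); apply: vanishes_below_lxor.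
Qed.

Lemma bopen_ball k x : bopen (ball k x).
Proof. by move=> y Bxy; exists k => z; apply: ball_trans. Qed.

Lemma bopen_metric U : bopen U <->
  forall x, U x -> exists eps, Rlt 0 eps /\ forall y, Rlt (bdist x y) eps -> U y.
Proof.
split=> Uopen x Ux.
- have [k Bk] := Uopen x Ux; exists (half_pow k); split; first exact: half_pow_gt0.
  by move=> y /bnorm_lt; apply: Bk.
- have [eps [eps_gt0 Beps]] := Uopen x Ux; have [k lt_eps] := half_pow_small eps_gt0.
  by exists k => y /bnorm_le Bxy; apply: Beps; rewrite /bdist; lra.
Qed.

Lemma bopen_topology : is_topology bopen.
Proof.
split; [|split].
- by exists 0.
- move=> U V Uopen Vopen x [Ux Vx].
  have [k1 B1] := Uopen x Ux; have [k2 B2] := Vopen x Vx.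
  exists (Nat.max k1 k2) => y Bxy; split; [apply: B1 | apply: B2];
    apply: vanishes_below_le Bxy; lia.
- move=> F Fopen x [U [FU Ux]]; have [k Bk] := Fopen U FU x Ux.
  by exists k => y /Bk Uy; exists U.
Qed.

Lemma bopen_hausdorff : hausdorff bopen.
Proof.
move=> x y x_neq_y.
have xy_neq0 : Nat.lxor (bits x) (bits y) <> 0.
  by move/Nat.lxor_eq_0_iff/bits_inj.
set k := S (lsb (Nat.lxor (bits x) (bits y))).
exists (ball k x), (ball k y).
split; [exact: bopen_ball | split; [exact: bopen_ball|]].
split; [exact: ball_refl | split; [exact: ball_refl|]].
move=> z Bxz Byz; have /(vanishes_below_lsb _ xy_neq0) := ball_trans Bxz (ball_sym Byz).
by rewrite /k; lia.
Qed.

Lemma bopen_top_group : is_top_group bopen.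
Proof.
split; [exact: bopen_topology | split; [exact: bopen_hausdorff | split]].
- move=> x y W Wopen Wxy; have [k Bk] := Wopen _ Wxy.
  exists (ball k x), (ball k y); split; [exact: bopen_ball | split; [exact: bopen_ball|]].
  split; [exact: ball_refl | split; [exact: ball_refl|]].
  move=> a b Bxa Byb; apply: Bk.
  by rewrite /ball !bitsD lxor_swap; apply: vanishes_below_lxor.
- by []. (* negation is the identity *)
Qed.

Lemma bopen_precompact : precompact bopen.
Proof.
move=> U [V [Vopen [V0 VU]]]; have [k Bk] := Vopen _ V0.
exists (List.map Bitset (List.seq 0 (2 ^ k))) => g.
set m := Nat.modulo (bits g) (2 ^ k).
exists (Bitset (Nat.lxor (bits g) m)), (Bitset m); split; [|split].
- apply/VU/Bk => i lt_ik.
  by rewrite /= Nat.lxor_0_l Nat.lxor_spec Nat.mod_pow2_bits_low // Bool.xorb_nilpotent.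
- apply/List.in_map/List.in_seq; split; first lia.
  by apply: Nat.mod_upper_bound; apply: Nat.pow_nonzero.
- by apply: bits_inj; rewrite bitsD /= Nat.lxor_assoc Nat.lxor_nilpotent Nat.lxor_0_r.
Qed.

(* Binary-reflected Gray code: bit i of [gray z] is the xor of bits i and i+1 of z. *)
Definition gray (z : nat) : nat := Nat.lxor z (Nat.div2 z).

Lemma gray_lxor a b : gray (Nat.lxor a b) = Nat.lxor (gray a) (gray b).
Proof. by rewrite /gray div2_lxor lxor_swap. Qed.

Lemma gray_eq0 z : gray z = 0 -> z = 0.
Proof.
move/Nat.lxor_eq_0_iff => z_half; case: (Nat.eq_dec z 0) => // /Nat.lt_div2_diag_l.
lia.
Qed.

Lemma gray_inj a b : gray a = gray b -> a = b.
Proof.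
move=> eq_gray; apply/Nat.lxor_eq_0_iff/gray_eq0.
by rewrite gray_lxor eq_gray Nat.lxor_nilpotent.
Qed.

(* xor of y, y/2, y/4, ..., the first [fuel] terms of it; inverts [gray] once
   [fuel] exceeds the bit length of y. *)
Fixpoint gray_decode_rec (fuel y : nat) : nat :=
  match fuel with
  | 0 => 0
  | S f => Nat.lxor y (gray_decode_rec f (Nat.div2 y))
  end.

Lemma gray_decode_recK fuel y : y <= fuel -> gray (gray_decode_rec fuel y) = y.
Proof.
elim: fuel y => [|f IH] y le_y_fuel; first by have -> : y = 0 by lia.
rewrite /= gray_lxor IH; last exact: Nat.div2_decr.
by rewrite /gray Nat.lxor_assoc Nat.lxor_nilpotent Nat.lxor_0_r.
Qed.

Lemma gray_surj y : exists z, gray z = y.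
Proof. by exists (gray_decode_rec y y); apply: gray_decode_recK. Qed.

Lemma gray_ones k : gray (Nat.ones (S k)) = 2 ^ k.
Proof.
apply: Nat.bits_inj => i; rewrite Nat.lxor_spec Nat.testbit_div2 Nat.pow2_bits_eqb.
case: (Nat.lt_trichotomy i k) => [lt_ik | [<- | lt_ki]].
- by rewrite !Nat.ones_spec_low; [have /Nat.eqb_neq -> : k <> i by lia | lia | lia].
- by rewrite Nat.ones_spec_low ?Nat.ones_spec_high ?Nat.eqb_refl //; lia.
- by rewrite !Nat.ones_spec_high; [have /Nat.eqb_neq -> : k <> i by lia | lia | lia].
Qed.

Lemma vanishes_below_gray k z : vanishes_below (S k) z -> vanishes_below k (gray z).
Proof.
move=> low_z i lt_ik; rewrite Nat.lxor_spec Nat.testbit_div2.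
by rewrite !low_z //; lia.
Qed.

Definition bgray (x : bitset) : bitset := Bitset (gray (bits x)).

Lemma bgray_cont_automorphism : cont_automorphism bopen bgray.
Proof.
split; [|split; [|split]].
- by move=> x y; apply: bits_inj; rewrite /= gray_lxor.
- by move=> x y /(congr1 bits) /gray_inj /bits_inj.
- by move=> y; have [z gray_z] := gray_surj (bits y); exists (Bitset z); apply: bits_inj.
- move=> W Wopen x Wx; have [k Bk] := Wopen _ Wx.
  exists (S k) => y Bxy; apply: Bk.
  by rewrite /ball /= -gray_lxor; apply: vanishes_below_gray.
Qed.

Lemma bgray_not_open : ~ open_map bopen bopen bgray.
Proof.
move=> bgray_open.
have [|k Bk] := bgray_open _ (@bopen_ball 1 (Bitset 0)) (Bitset 0).
  by exists (Bitset 0); split; [exact: ball_refl | apply: bits_inj].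
have [|x [Bx gray_x]] := Bk (Bitset (2 ^ k)).
  by move=> i lt_ik; rewrite /= Nat.lxor_0_l Nat.pow2_bits_eqb; apply/Nat.eqb_neq; lia.
have x_ones : bits x = Nat.ones (S k).
  by apply: gray_inj; rewrite gray_ones; move/(congr1 bits): gray_x.
by move: (Bx 0 Nat.lt_0_1); rewrite Nat.lxor_0_l x_ones Nat.ones_spec_low //; lia.
Qed.

Theorem theorem6p5 :
  exists (G : zmodType) (op : (G -> Prop) -> Prop),
    is_top_group op /\ countable_type G /\ metrizable op /\
    precompact op /\ ~ g_reversible op.
Proof.
exists bitset, bopen; split; first exact: bopen_top_group.
split; first by exists bits; apply: bits_inj.
split; first by exists bdist; split; [exact: bdist_metric | exact: bopen_metric].
split; first exact: bopen_precompact.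
by move=> g_rev; apply: bgray_not_open; apply: g_rev bgray_cont_automorphism.
Qed.
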